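(* Let $N=\{1,\dots,n\}$ and let $F:2^N\to\mathbb{R}$ be quasi-submodular. For the sequences $(X_t),(Y_t)$ generated by the maximization procedure (described in the context), $X_t\subseteq Y_t$ for every $t$, i.e., the lattice $[X_t,Y_t]$ is nonempty at every iteration.
   Context: For $A\subseteq N$ and $i\in N$, write $A+i=A\cup\{i\}$, $A-i=A\setminus\{i\}$, and $F(i\mid A)=F(A+i)-F(A)$. $F$ is quasi-submodular if for all $X,Y\subseteq N$ both hold: $F(X\cap Y)\ge F(X)\Rightarrow F(Y)\ge F(X\cup Y)$, and $F(X\cap Y)>F(X)\Rightarrow F(Y)>F(X\cup Y)$. $[A,B]=\{U: A\subseteq U\subseteq B\}$. Maximization procedure: set $X_0=\emptyset$, $Y_0=N$; for $t=0,1,2,\dots$: let $U_t=\{u\in Y_t\setminus X_t: F(u\mid Y_t-u)>0\}$ and $X_{t+1}=X_t\cup U_t$; let $D_t=\{d\in Y_t\setminus X_t: F(d\mid X_t)<0\}$ and $Y_{t+1}=Y_t\setminus D_t$; if $X_{t+1}=X_t$ and $Y_{t+1}=Y_t$, stop and output $[X_t,Y_t]$; otherwise continue with $t+1$. *)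

From HB Require Import structures.
From mathcomp Require Import all_boot all_order all_algebra.
Set Implicit Arguments. Unset Strict Implicit. Unset Printing Implicit Defensive.
Import Order.TTheory GRing.Theory Num.Theory.
Local Open Scope ring_scope.

Definition marg (R : realFieldType) (T : finType) (F : {set T} -> R)
  (i : T) (A : {set T}) : R := F (i |: A) - F A.

Definition quasi_submodular (R : realFieldType) (T : finType)
  (F : {set T} -> R) : Prop :=
  forall X Y : {set T},
    (F X <= F (X :&: Y) -> F (X :|: Y) <= F Y) /\
    (F X < F (X :&: Y) -> F (X :|: Y) < F Y).

Definition U_set (R : realFieldType) (T : finType) (F : {set T} -> R)
  (X Y : {set T}) : {set T} :=
  [set u in Y :\: X | 0 < marg F u (Y :\ u)].

Definition D_set (R : realFieldType) (T : finType) (F : {set T} -> R)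
  (X Y : {set T}) : {set T} :=
  [set d in Y :\: X | marg F d X < 0].

Definition max_step (R : realFieldType) (T : finType) (F : {set T} -> R)
  (p : {set T} * {set T}) : {set T} * {set T} :=
  (p.1 :|: U_set F p.1 p.2, p.2 :\: D_set F p.1 p.2).

(* Once the procedure stops,
   max_step is the identity, so the sequence stays constant afterwards;
   hence the statement "for every t" covers exactly the generated terms. *)
Definition max_seq (R : realFieldType) (T : finType) (F : {set T} -> R)
  (t : nat) : {set T} * {set T} :=
  iter t (max_step F) (set0, setT).

From HB Require Import structures.
From mathcomp Require Import all_boot all_order all_algebra.
Import Order.TTheory GRing.Theory Num.Theory.
Local Open Scope ring_scope.

(* An element x of Y \ X cannot be both added and deleted in the same step:
   quasi-submodularity applied to x + X and Y - x (whose meet is X and join is Y)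
   turns F(x | X) < 0 into F(x | Y - x) < 0.  Hence every step preserves
   X ⊆ Y, and the claim follows by induction on t. *)

Section QuasiSubmodular.

Variables (R : realFieldType) (T : finType) (F : {set T} -> R).
Hypothesis hF : quasi_submodular F.

Lemma setU1_meet_setD1 (X Y : {set T}) (x : T) :
  X \subset Y -> x \notin X -> (x |: X) :&: (Y :\ x) = X.
Proof.
move=> sXY nxX; apply/setP => z; rewrite !inE.
case: (eqVneq z x) => [->|_] /=; first by rewrite (negbTE nxX).
by case zX: (z \in X) => //=; rewrite (subsetP sXY z zX).
Qed.

Lemma setU1_join_setD1 (X Y : {set T}) (x : T) :
  X \subset Y -> x \in Y -> (x |: X) :|: (Y :\ x) = Y.
Proof.
move=> sXY xY; apply/setP => z; rewrite !inE.
case: (eqVneq z x) => [->|_] /=; first by rewrite xY.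
by case zX: (z \in X) => //=; rewrite (subsetP sXY z zX).
Qed.

Lemma marg_ge0_of_marg_setD1_gt0 (X Y : {set T}) (x : T) :
  X \subset Y -> x \in Y :\: X -> 0 < marg F x (Y :\ x) -> 0 <= marg F x X.
Proof.
move=> sXY /setDP[xY nxX]; rewrite /marg setD1K // !subr_ge0 subr_gt0 => ltY.
rewrite leNgt; apply/negP => ltX.
have [_] := hF (x |: X) (Y :\ x).
rewrite setU1_meet_setD1 // setU1_join_setD1 // => /(_ ltX).
by rewrite ltNge (ltW ltY).
Qed.

Lemma max_step_subset (X Y : {set T}) :
  X \subset Y -> (max_step F (X, Y)).1 \subset (max_step F (X, Y)).2.
Proof.
move=> sXY; apply/subsetP => x; rewrite /= /U_set /D_set !inE.
case/orP => [xX | /andP[/andP[nxX xY] gtY]].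
  by rewrite (subsetP sXY x xX) xX.
rewrite nxX xY /= andbT -leNgt.
apply: (@marg_ge0_of_marg_setD1_gt0 X Y x sXY _ gtY); by rewrite inE nxX.
Qed.

End QuasiSubmodular.

Theorem lemma5 (R : realFieldType) (n : nat) (F : {set 'I_n} -> R)
  (hF : quasi_submodular F) (t : nat) :
  (max_seq F t).1 \subset (max_seq F t).2.
Proof.
elim: t => [|t IH]; first exact: sub0set.
rewrite /max_seq iterS -/(max_seq F t).
case: (max_seq F t) IH => X Y; exact: max_step_subset.
Qed.
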